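(* Let $u$ be a user, let $I$ be a finite set of items, and let $s_{uq}(\theta)\in\mathbb{R}$ be the model score of item $q\in I$ for $u$ under parameters $\theta$. Rank all items by decreasing score (ties broken arbitrarily), let $r_q$ denote the position of item $q$ in this ranking, and let $R_k(u)$ be the set of the first $k$ items. Let $P(u)\subseteq I$ be a nonempty set of test positive items for $u$. Define $$\phi_u(p;\theta)=\frac{1}{1+\sum_{q\neq p}\exp\!\left(s_{uq}(\theta)-s_{up}(\theta)\right)},$$ $$\mathrm{DCG@k}(u)=\sum_{p\in P(u)\cap R_k(u)}\frac{1}{\log_2(r_p+1)},\qquad Z_k(u)=\mathrm{IDCG@k}(u)=\sum_{i=1}^{\min(k,|P(u)|)}\frac{1}{\log_2(i+1)},$$ and $\mathrm{NDCG@k}(u)=\mathrm{DCG@k}(u)/\mathrm{IDCG@k}(u)$. Then $$\mathrm{NDCG@k}(u)\ \ge\ \frac{1}{Z_k(u)}\sum_{p\in P(u)}\mathbb{I}(r_p\le k)\,\phi_u(p;\theta),$$ where $\mathbb{I}(\cdot)$ is the indicator function.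
   Context: Here $k\ge 1$ is an integer and the sum in $\phi_u$ ranges over all items $q\in I$ other than $p$. *)

From HB Require Import structures.
From mathcomp Require Import all_boot all_order all_algebra.
From mathcomp Require Import all_classical all_reals.
From mathcomp Require Import all_analysis.
Set Implicit Arguments. Unset Strict Implicit. Unset Printing Implicit Defensive.
Import Order.TTheory GRing.Theory Num.Theory.
Local Open Scope ring_scope.

(* Setting: I a finite set of items, s : I -> R the scores s_{uq}(theta) for the
   fixed user u and fixed parameters theta. *)

Definition log2 {R : realType} (x : R) : R := ln x / ln 2.

(* A ranking of the items: a bijection from items to positions 1..|I|
   (stored 0-based as 'I_#|I|), ordering items by decreasing score,
   ties broken arbitrarily. *)
Definition is_ranking {R : realType} {I : finType} (s : I -> R)
  (pos : I -> 'I_#|I|) : Prop :=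
  bijective pos /\ forall p q : I, s q < s p -> (pos p < pos q)%N.

Definition rnk {I : finType} (pos : I -> 'I_#|I|) (q : I) : nat := (pos q).+1.

Definition topk {I : finType} (pos : I -> 'I_#|I|) (k : nat) : {set I} :=
  [set q | (rnk pos q <= k)%N].

Definition phi {R : realType} {I : finType} (s : I -> R) (p : I) : R :=
  1 / (1 + \sum_(q : I | q != p) expR (s q - s p)).

Definition DCG {R : realType} {I : finType} (pos : I -> 'I_#|I|) (P : {set I})
  (k : nat) : R :=
  \sum_(p in P :&: topk pos k) 1 / log2 ((rnk pos p)%:R + 1).

Definition IDCG {R : realType} {I : finType} (P : {set I}) (k : nat) : R :=
  \sum_(1 <= i < (minn k #|P|).+1) 1 / log2 (i%:R + 1).

Definition NDCG {R : realType} {I : finType} (pos : I -> 'I_#|I|) (P : {set I})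
  (k : nat) : R := DCG pos P k / IDCG (R := R) P k.

From HB Require Import structures.
From mathcomp Require Import all_boot all_order all_algebra.
From mathcomp Require Import all_classical all_reals.
From mathcomp Require Import all_analysis.
Set Implicit Arguments. Unset Strict Implicit. Unset Printing Implicit Defensive.
Import Order.TTheory GRing.Theory Num.Theory.
Local Open Scope ring_scope.

(* The r_p - 1 items ranked above p score at least s_p, so each of them
   contributes exp(s_q - s_p) >= 1 to the denominator of phi(p); hence
   phi(p) <= 1 / r_p <= 1 / log2(r_p + 1). *)

Lemma card_ord_lt (n m : nat) : (m <= n)%N -> #|[set j : 'I_n | (j < m)%N]| = m.
Proof.
move=> le_mn.
have -> : [set j : 'I_n | (j < m)%N] = widen_ord le_mn @: [set: 'I_m].
  apply/setP => j; rewrite inE; apply/idP/imsetP => [lt_jm | [i _ ->]].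
    by exists (Ordinal lt_jm) => //; apply: val_inj.
  exact: (ltn_ord i).
rewrite card_imset ?cardsT ?card_ord // => i j /(congr1 val) eq_ij.
exact: val_inj.
Qed.

Lemma card_ranked_before (I : finType) (n : nat) (pos : I -> 'I_n) (p : I) :
  bijective pos -> #|[set q | (pos q < pos p)%N]| = pos p.
Proof.
move=> bij_pos.
have -> : [set q | (pos q < pos p)%N] = pos @^-1: [set j : 'I_n | (j < pos p)%N].
  by apply/setP => q; rewrite !inE.
by rewrite on_card_preimset ?card_ord_lt 1?ltnW //; exact: onW_bij.
Qed.

Lemma ranked_before_score_ge (R : realType) (I : finType) (s : I -> R)
    (pos : I -> 'I_#|I|) (p q : I) :
  is_ranking s pos -> (pos q < pos p)%N -> s p <= s q.
Proof.
by case=> _ ranked lt_qp; rewrite leNgt; apply/negP => /ranked /(ltn_trans lt_qp); rewrite ltnn.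
Qed.

Lemma card_le_sum_expR (R : realType) (I : finType) (s : I -> R) (p : I)
    (A : {set I}) :
  p \notin A -> {in A, forall q, s p <= s q} ->
  #|A|%:R <= \sum_(q | q != p) expR (s q - s p).
Proof.
move=> pNA score_ge.
have -> : #|A|%:R = \sum_(q | q != p) (if q \in A then 1 else 0) :> R.
  rewrite -big_mkcondr -sum1_card natr_sum; apply: eq_bigl => q.
  by case: eqP => [->|_]; rewrite ?(negbTE pNA).
apply: ler_sum => q _; case: ifPn => [qA|_]; last exact: expR_ge0.
by rewrite -expR0 ler_expR subr_ge0 score_ge.
Qed.

Lemma phi_le_inv_rank (R : realType) (I : finType) (s : I -> R)
    (pos : I -> 'I_#|I|) (p : I) :
  is_ranking s pos -> phi s p <= ((rnk pos p)%:R)^-1.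
Proof.
move=> ranking; set A := [set q | (pos q < pos p)%N].
have card_A : #|A|%:R <= \sum_(q | q != p) expR (s q - s p).
  apply: card_le_sum_expR => [|q]; first by rewrite inE ltnn.
  by rewrite inE; exact: ranked_before_score_ge.
have sum_ge0 : 0 <= \sum_(q | q != p) expR (s q - s p).
  by apply: sumr_ge0 => q _; exact: expR_ge0.
rewrite /phi div1r lef_pV2 ?posrE ?ltr0n ?ltr_wpDr //.
by rewrite /rnk -addn1 natrD addrC lerD2l -(card_ranked_before p (proj1 ranking)).
Qed.

Lemma log2_gt0 (R : realType) (x : R) : 1 < x -> 0 < log2 x.
Proof. by move=> gt1x; rewrite /log2 divr_gt0 ?ln_gt0 ?ltr1n. Qed.

Lemma log2_natS_le (R : realType) (n : nat) : log2 (n%:R + 1 : R) <= n%:R.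
Proof.
have ln2_gt0 : 0 < ln (2 : R) by rewrite ln_gt0 ?ltr1n.
rewrite /log2 ler_pdivrMr // mulr_natl -lnXn ?ltr0n // ler_ln ?posrE ?ltr_wpDl //.
by rewrite natr1 -natrX ler_nat ltn_expl.
Qed.

Lemma phi_le_inv_log2_rank (R : realType) (I : finType) (s : I -> R)
    (pos : I -> 'I_#|I|) (p : I) :
  is_ranking s pos -> phi s p <= 1 / log2 ((rnk pos p)%:R + 1).
Proof.
move=> ranking; apply: le_trans (phi_le_inv_rank p ranking) _.
rewrite div1r lef_pV2 ?posrE ?ltr0n ?log2_natS_le //.
by rewrite log2_gt0 // ltrDr ltr0n.
Qed.

Lemma IDCG_gt0 (R : realType) (I : finType) (P : {set I}) (k : nat) :
  (1 <= k)%N -> (0 < #|P|)%N -> 0 < IDCG (R := R) P k.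
Proof.
move=> k_gt0 P_gt0; rewrite /IDCG big_ltn ?ltnS ?leq_min ?k_gt0 //.
apply: ltr_wpDr; last by rewrite div1r invr_gt0 log2_gt0 // ltrDr.
rewrite big_nat_cond; apply: sumr_ge0 => i /andP[/andP[lt1i _] _].
by rewrite div1r invr_ge0 ltW // log2_gt0 // ltrDr ltr0n ltnW.
Qed.

Lemma DCG_indicatorE (R : realType) (I : finType) (pos : I -> 'I_#|I|)
    (P : {set I}) (k : nat) :
  DCG pos P k = \sum_(p in P)
    (if (rnk pos p <= k)%N then 1 else 0) * (1 / log2 ((rnk pos p)%:R + 1) : R).
Proof.
rewrite /DCG big_mkcond [X in _ = X]big_mkcond /=; apply: eq_bigr => p _.
by rewrite /topk !inE; case: (p \in P) => //=; case: ifP; rewrite ?mul1r ?mul0r.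
Qed.

Theorem corollary2 (R : realType) (I : finType) (s : I -> R)
  (pos : I -> 'I_#|I|) (P : {set I}) (k : nat) :
  (1 <= k)%N ->
  is_ranking s pos ->
  (0 < #|P|)%N ->
  NDCG pos P k >=
    (IDCG (R := R) P k)^-1 *
      \sum_(p in P) (if (rnk pos p <= k)%N then 1 else 0) * phi s p.
Proof.
move=> k_gt0 ranking P_gt0.
rewrite /NDCG mulrC ler_pM2r ?invr_gt0 ?IDCG_gt0 // DCG_indicatorE.
apply: ler_sum => p _; case: ifP => _; rewrite ?mul0r ?mul1r //.
by rewrite -div1r phi_le_inv_log2_rank.
Qed.
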